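(* Let $\mathcal{P}$ be a program and let $\mathcal{P}'$ be obtained from $\mathcal{P}$ by replacing a labelled instruction $\ell_1: r := x;\ \texttt{goto}\ \ell_2$ of a thread $t$ (where $x$ is a shared variable and $r$ a register of $t$) with $\ell_1: \texttt{havoc}(r,\phi(x,\vec r));\ \texttt{goto}\ \ell_2$, where $\phi$ is such that $\forall x, r.\ x = r \implies \phi(x,\vec r)$ is valid. Then $\mathcal{P} \preceq_{SC} \mathcal{P}'$ and $\mathcal{P} \preceq_{TSO} \mathcal{P}'$.
   Context: Programs. A program has a finite set of shared variables and a finite set of threads; each thread $t$ has registers $\vec r_t$, a start label, and a finite set of labelled instructions ''$\ell: \mathit{inst};\ \texttt{goto}\ \ell'$'', where $\mathit{inst}$ is one of: $x := e$ (write to a shared variable), $r := e$, $r := x$ (read of a shared variable), $\texttt{fence}$, $r := \texttt{cas}(x,e_1,e_2)$, $\texttt{skip}$, $\texttt{assume}\ b$, with $e,e_1,e_2,b$ expressions over the thread's registers; additionally a havoc instruction $\texttt{havoc}(r,\phi)$, where $\phi$ is a boolean expression over registers of the thread and a single shared variable $x$, assigns to $r$ any value $v$ such that $\phi$ holds when $r$ is interpreted as $v$, the other registers by their current values, and $x$ by its current value as seen by the thread (under TSO: the latest value for $x$ in the thread's store buffer if any, else the memory value). All variables and registers start at $0$. Semantics. Under TSO, each thread has a FIFO store buffer: a write $x:=e$ appends $(x,v)$ to the buffer, and buffered writes are nondeterministically flushed (oldest first) to memory; reads take the latest buffered value for the variable if any, else the memory value; $\texttt{fence}$ and $\texttt{cas}$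 require the thread's buffer to be empty; $\texttt{cas}(x,e_1,e_2)$ atomically sets $x$ to the value of $e_2$ and $r:=1$ if $x$ equals the value of $e_1$, else sets $r:=0$; $\texttt{assume}\ b$ blocks unless $b$ holds. Under SC there are no buffers: writes update memory immediately and reads read memory. Executions start from the initial state (and, under TSO, end with empty buffers). Abstraction. For $\mathbb{M}\in\{SC, TSO\}$, $\mathcal{P}\preceq_{\mathbb{M}}\mathcal{P}'$ means that every valuation of the shared variables reachable from the initial state in an $\mathbb{M}$ execution of $\mathcal{P}$ is also reachable in an $\mathbb{M}$ execution of $\mathcal{P}'$. *)

From Stdlib Require Import ZArith List Arith Relations.
Import ListNotations.
Open Scope Z_scope.

Definition var := nat.
Definition reg := nat.    (* register names (local to a thread) *)
Definition label := nat.
Definition val := Z.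

Definition regs := reg -> val.
Definition mem := var -> val.

(* expressions over the registers of a thread (shallow embedding) *)
Definition exp := regs -> val.
Definition bexp := regs -> bool.
(* formula over the registers and a single shared variable x (its value) *)
Definition hformula := regs -> val -> bool.

Inductive inst : Type :=
| IWrite  : var -> exp -> inst
| IAssign : reg -> exp -> inst
| IRead   : reg -> var -> inst
| IFence  : inst
| ICas    : reg -> var -> exp -> exp -> inst   (* r := cas(x,e1,e2) *)
| ISkip   : inst
| IAssume : bexp -> inst
| IHavoc  : reg -> var -> hformula -> inst.    (* havoc(r, phi) ; phi mentions var x *)

(* l : inst ; goto l' *)
Definition linst := (label * inst * label)%type.

Record thread := mkThread { start : label; instrs : list linst }.
Definition program := list thread.

Definition upd_reg (rs : regs) (r : reg) (v : val) : regs :=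
  fun r' => if Nat.eqb r' r then v else rs r'.
Definition upd_mem (m : mem) (x : var) (v : val) : mem :=
  fun y => if Nat.eqb y x then v else m y.
Definition upd {A} (f : nat -> A) (i : nat) (a : A) : nat -> A :=
  fun j => if Nat.eqb j i then a else f j.

Definition buffer := list (var * val).  (* FIFO, oldest first *)

Record config := mkConfig {
  cmem : mem;
  cpc  : nat -> label;
  cregs : nat -> regs;
  cbuf : nat -> buffer
}.

Definition init_config (P : program) : config :=
  mkConfig (fun _ => 0)
           (fun t => match nth_error P t with Some th => start th | None => 0%nat end)
           (fun _ _ => 0) (fun _ => []).

(* latest buffered value of x, if any *)
Definition buf_lookup (b : buffer) (x : var) : option val :=
  fold_left (fun acc p => if Nat.eqb (fst p) x then Some (snd p) else acc) b None.

Definition tso_val (m : mem) (b : buffer) (x : var) : val :=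
  match buf_lookup b x with Some v => v | None => m x end.

Definition enabled (P : program) (c : config) (t : nat) (l : label) (i : inst) (l' : label) :=
  exists th, nth_error P t = Some th /\ In (l, i, l') (instrs th) /\ cpc c t = l.

Definition set_local (c : config) (t : nat) (l' : label) (rs : regs) : config :=
  mkConfig (cmem c) (upd (cpc c) t l') (upd (cregs c) t rs) (cbuf c).

(* Sequential consistency: no buffers *)
Inductive sc_step (P : program) : config -> config -> Prop :=
| sc_write : forall c t l l' x e, enabled P c t l (IWrite x e) l' ->
    sc_step P c (mkConfig (upd_mem (cmem c) x (e (cregs c t))) (upd (cpc c) t l') (cregs c) (cbuf c))
| sc_assign : forall c t l l' r e, enabled P c t l (IAssign r e) l' ->
    sc_step P c (set_local c t l' (upd_reg (cregs c t) r (e (cregs c t))))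
| sc_read : forall c t l l' r x, enabled P c t l (IRead r x) l' ->
    sc_step P c (set_local c t l' (upd_reg (cregs c t) r (cmem c x)))
| sc_fence : forall c t l l', enabled P c t l IFence l' ->
    sc_step P c (set_local c t l' (cregs c t))
| sc_cas_ok : forall c t l l' r x e1 e2, enabled P c t l (ICas r x e1 e2) l' ->
    cmem c x = e1 (cregs c t) ->
    sc_step P c (mkConfig (upd_mem (cmem c) x (e2 (cregs c t))) (upd (cpc c) t l')
                          (upd (cregs c) t (upd_reg (cregs c t) r 1)) (cbuf c))
| sc_cas_fail : forall c t l l' r x e1 e2, enabled P c t l (ICas r x e1 e2) l' ->
    cmem c x <> e1 (cregs c t) ->
    sc_step P c (set_local c t l' (upd_reg (cregs c t) r 0))
| sc_skip : forall c t l l', enabled P c t l ISkip l' ->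
    sc_step P c (set_local c t l' (cregs c t))
| sc_assume : forall c t l l' b, enabled P c t l (IAssume b) l' ->
    b (cregs c t) = true ->
    sc_step P c (set_local c t l' (cregs c t))
| sc_havoc : forall c t l l' r x phi v, enabled P c t l (IHavoc r x phi) l' ->
    phi (upd_reg (cregs c t) r v) (cmem c x) = true ->
    sc_step P c (set_local c t l' (upd_reg (cregs c t) r v)).

Inductive tso_step (P : program) : config -> config -> Prop :=
| tso_write : forall c t l l' x e, enabled P c t l (IWrite x e) l' ->
    tso_step P c (mkConfig (cmem c) (upd (cpc c) t l') (cregs c)
                           (upd (cbuf c) t (cbuf c t ++ [(x, e (cregs c t))])))
| tso_assign : forall c t l l' r e, enabled P c t l (IAssign r e) l' ->
    tso_step P c (set_local c t l' (upd_reg (cregs c t) r (e (cregs c t))))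
| tso_read : forall c t l l' r x, enabled P c t l (IRead r x) l' ->
    tso_step P c (set_local c t l' (upd_reg (cregs c t) r (tso_val (cmem c) (cbuf c t) x)))
| tso_fence : forall c t l l', enabled P c t l IFence l' ->
    cbuf c t = [] ->
    tso_step P c (set_local c t l' (cregs c t))
| tso_cas_ok : forall c t l l' r x e1 e2, enabled P c t l (ICas r x e1 e2) l' ->
    cbuf c t = [] -> cmem c x = e1 (cregs c t) ->
    tso_step P c (mkConfig (upd_mem (cmem c) x (e2 (cregs c t))) (upd (cpc c) t l')
                           (upd (cregs c) t (upd_reg (cregs c t) r 1)) (cbuf c))
| tso_cas_fail : forall c t l l' r x e1 e2, enabled P c t l (ICas r x e1 e2) l' ->
    cbuf c t = [] -> cmem c x <> e1 (cregs c t) ->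
    tso_step P c (set_local c t l' (upd_reg (cregs c t) r 0))
| tso_skip : forall c t l l', enabled P c t l ISkip l' ->
    tso_step P c (set_local c t l' (cregs c t))
| tso_assume : forall c t l l' b, enabled P c t l (IAssume b) l' ->
    b (cregs c t) = true ->
    tso_step P c (set_local c t l' (cregs c t))
| tso_havoc : forall c t l l' r x phi v, enabled P c t l (IHavoc r x phi) l' ->
    phi (upd_reg (cregs c t) r v) (tso_val (cmem c) (cbuf c t) x) = true ->
    tso_step P c (set_local c t l' (upd_reg (cregs c t) r v))
| tso_flush : forall c t x v rest, cbuf c t = (x, v) :: rest ->
    tso_step P c (mkConfig (upd_mem (cmem c) x v) (cpc c) (cregs c) (upd (cbuf c) t rest)).

Inductive model := SC | TSO.

Definition step (M : model) (P : program) : config -> config -> Prop :=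
  match M with SC => sc_step P | TSO => tso_step P end.

(* shared-variable valuation reachable in an M-execution (TSO: ending with empty buffers) *)
Definition reachable (M : model) (P : program) (m : mem) : Prop :=
  exists c, clos_refl_trans _ (step M P) (init_config P) c /\
            (forall t, cbuf c t = []) /\ cmem c = m.

Definition abstracts (M : model) (P P' : program) : Prop :=
  forall m, reachable M P m -> reachable M P' m.

Fixpoint list_update {A} (s : list A) (k : nat) (a : A) : list A :=
  match s, k with
  | [], _ => []
  | _ :: s', O => a :: s'
  | b :: s', S k' => b :: list_update s' k' a
  end.

Definition replace_instr (P : program) (t k : nat) (i : linst) : program :=
  match nth_error P t with
  | Some th => list_update P t (mkThread (start th) (list_update (instrs th) k i))
  | None => P
  end.

(* Every step of P is also a step of P' from the same configuration: all instructions
   other than the replaced read are untouched, and the read r := x, which loads the value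
   v that thread t currently sees for x, is mimicked by havoc choosing r := v, allowed
   because phi holds whenever r equals the value of x. Replacing an instruction does not
   change start labels, so both programs start from the same configuration; hence every
   execution of P, under SC as under TSO, is an execution of P'. *)
From Stdlib Require Import List Arith Relations Lia FunctionalExtensionality.

Lemma nth_error_list_update_eq {A} (s : list A) k a b :
  nth_error s k = Some a -> nth_error (list_update s k b) k = Some b.
Proof.
  revert k; induction s as [|y s IH]; intros [|k] Hk; simpl in *; auto; discriminate.
Qed.

Lemma nth_error_list_update_neq {A} (s : list A) k j b :
  j <> k -> nth_error (list_update s k b) j = nth_error s j.
Proof.
  revert k j; induction s as [|y s IH]; intros [|k] [|j] Hjk; simpl; auto; lia.
Qed.

Lemma in_list_update {A} (s : list A) k a b e :
  nth_error s k = Some a -> In e s -> e = a \/ In e (list_update s k b).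
Proof.
  revert k; induction s as [|y s IH]; intros [|k] Hk He; simpl in *; try contradiction.
  - injection Hk as ->. destruct He as [->|He]; auto.
  - destruct He as [->|He]; auto.
    destruct (IH k Hk He); auto.
Qed.

Lemma clos_refl_trans_incl {A} (R R' : relation A) :
  inclusion A R R' -> inclusion A (clos_refl_trans A R) (clos_refl_trans A R').
Proof.
  intros HR a b Hab; induction Hab.
  - now apply rt_step, HR.
  - apply rt_refl.
  - eapply rt_trans; eauto.
Qed.

Lemma abstracts_of_step_incl M P P' :
  init_config P' = init_config P ->
  inclusion config (step M P) (step M P') ->
  abstracts M P P'.
Proof.
  intros Hinit Hstep m (c & Hc & Hbuf & Hmem).
  exists c; split; auto.
  rewrite Hinit; exact (clos_refl_trans_incl _ _ Hstep _ _ Hc).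
Qed.

Section ReplaceInstr.
Variables (P : program) (t k : nat) (th : thread) (l1 l2 : label) (i0 i1 : inst).
Hypothesis Hth : nth_error P t = Some th.
Hypothesis Hk : nth_error (instrs th) k = Some (l1, i0, l2).

Let th' := mkThread (start th) (list_update (instrs th) k (l1, i1, l2)).
Let P' := replace_instr P t k (l1, i1, l2).

Lemma nth_error_replace_instr_eq : nth_error P' t = Some th'.
Proof. unfold P', replace_instr; rewrite Hth; eapply nth_error_list_update_eq; eauto. Qed.

Lemma nth_error_replace_instr_neq u : u <> t -> nth_error P' u = nth_error P u.
Proof. intro Hu; unfold P', replace_instr; rewrite Hth; now apply nth_error_list_update_neq. Qed.

Lemma init_config_replace_instr : init_config P' = init_config P.
Proof.
  unfold init_config; f_equal; apply functional_extensionality; intro u.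
  destruct (Nat.eq_dec u t) as [->|Hu].
  - now rewrite nth_error_replace_instr_eq, Hth.
  - now rewrite nth_error_replace_instr_neq.
Qed.

Lemma enabled_replace_instr c u l i l' :
  enabled P c u l i l' ->
  enabled P' c u l i l' \/
  (u = t /\ l = l1 /\ i = i0 /\ l' = l2 /\ enabled P' c t l1 i1 l2).
Proof.
  intros (thu & Hu & Hin & Hpc).
  destruct (Nat.eq_dec u t) as [->|Hne].
  - rewrite Hth in Hu; injection Hu as <-.
    destruct (in_list_update _ _ _ (l1, i1, l2) _ Hk Hin) as [Heq|Hin'].
    + injection Heq as -> -> ->.
      right; repeat split; auto.
      exists th'; split; [apply nth_error_replace_instr_eq|split; auto].
      apply nth_error_In with k; eapply nth_error_list_update_eq; eauto.
    + left; exists th'; split; [apply nth_error_replace_instr_eq|auto].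
  - left; exists thu; now rewrite nth_error_replace_instr_neq.
Qed.

End ReplaceInstr.

Section ReadToHavoc.
Variables (P : program) (t k : nat) (th : thread) (l1 l2 : label) (r : reg) (x : var)
  (phi : hformula).
Hypothesis Hth : nth_error P t = Some th.
Hypothesis Hk : nth_error (instrs th) k = Some (l1, IRead r x, l2).
Hypothesis Hphi : forall (rs : regs) (xv : val), rs r = xv -> phi rs xv = true.

Let P' := replace_instr P t k (l1, IHavoc r x phi, l2).

Lemma phi_upd_reg rs v : phi (upd_reg rs r v) v = true.
Proof. apply Hphi; unfold upd_reg; now rewrite Nat.eqb_refl. Qed.

Lemma step_read_to_havoc M : inclusion config (step M P) (step M P').
Proof.
  intros c c' Hstep; destruct M; simpl in *; destruct Hstep;
    try match goal with
        | He : enabled _ _ _ _ _ _ |- _ =>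
            destruct (enabled_replace_instr _ _ _ _ _ _ _ (IHavoc r x phi) Hth Hk _ _ _ _ _ He)
              as [He'|(-> & -> & Hi & -> & He')]
        end;
    try discriminate; try (econstructor; eauto; fail);
    injection Hi as -> ->.
  - eapply sc_havoc; eauto; apply phi_upd_reg.
  - eapply tso_havoc; eauto; apply phi_upd_reg.
Qed.

End ReadToHavoc.

Theorem lemma3 (P : program) (t k : nat) (th : thread)
  (l1 l2 : label) (r : reg) (x : var) (phi : hformula) :
  nth_error P t = Some th ->
  nth_error (instrs th) k = Some (l1, IRead r x, l2) ->
  (forall (rs : regs) (xv : val), rs r = xv -> phi rs xv = true) ->
  abstracts SC P (replace_instr P t k (l1, IHavoc r x phi, l2)) /\
  abstracts TSO P (replace_instr P t k (l1, IHavoc r x phi, l2)).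
Proof.
  intros Hth Hk Hphi.
  split; apply abstracts_of_step_incl;
    solve [eapply init_config_replace_instr; eauto | eapply step_read_to_havoc; eauto].
Qed.
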